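(* Let $G$ be a commutative group and $f_1,f_2$ bijections of $G$ such that $G(f_1)$ and $G(f_2)$ are not groups. Then $G(f_1)\cong G(f_2)$ if and only if there is $\psi\in\mathrm{Aut}(G)$ such that $$f_2^{-1}\psi f_1(x)=f_2^{-1}\psi f_1(1)\cdot\psi(x)\quad\text{for all }x\in G,$$ and $f_2^{-1}\psi f_1(1)$ is a square in $G$.
   Context: Construction $G(f)$: for a commutative group $G$ (written multiplicatively) and a bijection $f:G\to G$, let $\overline{G}=\{\overline{x}:x\in G\}$ be a disjoint copy of $G$, and let $G(f)$ be the set $G\cup\overline{G}$ with multiplication $*$ defined for $x,y\in G$ by $x*y=xy$, $x*\overline{y}=\overline{xy}$, $\overline{x}*y=\overline{xy}$, $\overline{x}*\overline{y}=f(xy)$. It is a commutative loop (a set with a binary operation, neutral element $1$, and bijective left and right translations). *)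

Set Implicit Arguments.

Record ComGroup := {
  carrier :> Type;
  gmul : carrier -> carrier -> carrier;
  gone : carrier;
  ginv : carrier -> carrier;
  gmulA : forall x y z, gmul x (gmul y z) = gmul (gmul x y) z;
  gmulC : forall x y, gmul x y = gmul y x;
  gmul1 : forall x, gmul gone x = x;
  gmulV : forall x, gmul (ginv x) x = gone
}.

Definition is_inverse (A : Type) (f finv : A -> A) : Prop :=
  (forall x, finv (f x) = x) /\ (forall y, f (finv y) = y).

Definition is_aut {G : ComGroup} (psi : G -> G) : Prop :=
  (exists psi', is_inverse psi psi') /\
  (forall x y, psi (gmul G x y) = gmul G (psi x) (psi y)).

Definition is_square {G : ComGroup} (x : G) : Prop :=
  exists y : G, x = gmul G y y.

(* The loop G(f): carrier G + G, where inl x = x and inr x = \bar x. *)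
Definition Gf_carrier (G : ComGroup) : Type := (G + G)%type.

Definition Gf_mul {G : ComGroup} (f : G -> G) (a b : Gf_carrier G) : Gf_carrier G :=
  match a, b with
  | inl x, inl y => inl (gmul G x y)
  | inl x, inr y => inr (gmul G x y)
  | inr x, inl y => inr (gmul G x y)
  | inr x, inr y => inl (f (gmul G x y))
  end.

Definition is_group (S : Type) (op : S -> S -> S) : Prop :=
  exists e : S,
    (forall x, op e x = x /\ op x e = x) /\
    (forall x y z, op x (op y z) = op (op x y) z) /\
    (forall x, exists y, op x y = e /\ op y x = e).

Definition magma_iso (S1 S2 : Type) (op1 : S1 -> S1 -> S1) (op2 : S2 -> S2 -> S2) : Prop :=
  exists (phi : S1 -> S2) (phi' : S2 -> S1),
    (forall x, phi' (phi x) = x) /\ (forall y, phi (phi' y) = y) /\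
    (forall a b, phi (op1 a b) = op2 (phi a) (phi b)).

From Stdlib Require Import Setoid.

(* The key invariant is the magma property "a is square-associative":
   (a a) b = a (a b) for all b.  Every element of G is square-associative
   in G(f); if some x-bar were, then f(u v) = u f(v) for all u, v, which
   forces G(f) to be a group.  Hence, in a non-group G(f), the
   square-associative elements are exactly those of G.  Being a magma
   invariant, this shows that any isomorphism G(f1) -> G(f2) maps G onto G
   and G-bar onto G-bar; writing phi(x) = psi(x) and phi(x-bar) =
   (psi(x) a)-bar, the multiplication rules yield that psi is an
   automorphism with f2^-1 psi f1 (x) = a^2 psi(x).  Conversely such psi and
   a square root a of c give the isomorphism x |-> psi x,
   x-bar |-> (a psi x)-bar. *)

Notation "x ** y" := (gmul _ x y) (at level 40, left associativity).

Section GroupFacts.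
Variable G : ComGroup.
Local Notation "1" := (gone G).

Lemma mulCA (x y z : G) : x ** (y ** z) = y ** (x ** z).
Proof. rewrite gmulA, (gmulC _ x y), <- gmulA. reflexivity. Qed.

Lemma mulr1 (x : G) : x ** 1 = x.
Proof. rewrite gmulC; apply gmul1. Qed.

Lemma mulrV (x : G) : x ** ginv G x = 1.
Proof. rewrite gmulC; apply gmulV. Qed.

Lemma mulKV (x z : G) : x ** (ginv G x ** z) = z.
Proof. rewrite gmulA, mulrV, gmul1. reflexivity. Qed.

Lemma mulVK (x z : G) : ginv G x ** (x ** z) = z.
Proof. rewrite gmulA, gmulV, gmul1. reflexivity. Qed.

Lemma idem_one (x : G) : x ** x = x -> x = 1.
Proof. intro H. rewrite <- (mulVK x x), H, gmulV. reflexivity. Qed.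

(* If f commutes with translations, f(u v) = u f(v), then G(f) is a group
   (it is the extension of G by Z/2 with cocycle value f(1)). *)
Lemma Gf_group_of_translation_invariant (f f' : G -> G) :
  is_inverse f f' -> (forall u v, f (u ** v) = u ** f v) -> is_group (Gf_mul f).
Proof.
  intros [_ ff'] Hf.
  exists (inl 1). split; [|split].
  - intros [x|x]; simpl; rewrite gmul1, mulr1; auto.
  - intros [x|x] [y|y] [z|z]; simpl; try (now rewrite gmulA); f_equal.
    + rewrite <- gmulA; symmetry; apply Hf.
    + rewrite (gmulC _ (f (x ** y)) z), <- (Hf z). f_equal.
      rewrite (gmulC _ z), <- gmulA. reflexivity.
    + rewrite (gmulC _ (f (x ** y)) z), <- (Hf z), <- (Hf x). f_equal.
      rewrite (gmulC _ z), <- gmulA. reflexivity.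
  - intros [x|x].
    + exists (inl (ginv G x)); simpl; rewrite mulrV, gmulV; auto.
    + exists (inr (ginv G x ** f' 1)); simpl.
      rewrite mulKV, (gmulC _ (ginv G x ** f' 1) x), mulKV, ff'; auto.
Qed.

End GroupFacts.

Arguments mulCA {G}. Arguments mulr1 {G}. Arguments mulKV {G}.
Arguments mulVK {G}. Arguments idem_one {G}.
Arguments Gf_group_of_translation_invariant {G f f'}.

Definition sq_assoc (S : Type) (op : S -> S -> S) (a : S) : Prop :=
  forall b, op (op a a) b = op a (op a b).
Arguments sq_assoc {S}.

Lemma iso_sq_assoc (S1 S2 : Type) (op1 : S1 -> S1 -> S1) (op2 : S2 -> S2 -> S2)
  (phi : S1 -> S2) (phi' : S2 -> S1) :
  (forall x, phi' (phi x) = x) -> (forall y, phi (phi' y) = y) ->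
  (forall a b, phi (op1 a b) = op2 (phi a) (phi b)) ->
  forall a, sq_assoc op1 a <-> sq_assoc op2 (phi a).
Proof.
  intros phi'phi phiphi' Hm a. split; intros HP b.
  - rewrite <- (phiphi' b), <- !Hm, HP. reflexivity.
  - rewrite <- (phi'phi (op1 (op1 a a) b)), <- (phi'phi (op1 a (op1 a b))), !Hm.
    rewrite HP. reflexivity.
Qed.

Arguments iso_sq_assoc {S1 S2 op1 op2 phi phi'}.

Definition in_G {G : ComGroup} (s : Gf_carrier G) : Prop :=
  match s with inl _ => True | inr _ => False end.

Definition Gf_val {G : ComGroup} (s : Gf_carrier G) : G :=
  match s with inl y => y | inr y => y end.

Lemma Gf_sq_assoc_iff_in_G (G : ComGroup) (f f' : G -> G) :
  is_inverse f f' -> ~ is_group (Gf_mul f) ->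
  forall s, sq_assoc (Gf_mul f) s <-> in_G s.
Proof.
  intros hf hng [x|x]; simpl; split; try tauto.
  - intros _ [y|y]; simpl; f_equal; rewrite gmulA; reflexivity.
  - (* Square-associativity of x-bar tested on y-bar gives
       f(x x) y = x f(x y), so f is x^-1 f(x x) times a translate of itself. *)
    intro H. apply hng, (Gf_group_of_translation_invariant hf).
    assert (Hx : forall y, f (x ** x) ** y = x ** f (x ** y))
      by (intro y; specialize (H (inr y)); simpl in H; injection H; auto).
    assert (Fx : forall w, f w = ginv G x ** (f (x ** x) ** (ginv G x ** w)))
      by (intro w; rewrite Hx, mulKV, mulVK; reflexivity).
    intros u v. rewrite (Fx (u ** v)), (Fx v).
    rewrite (mulCA u (ginv G x)), (mulCA u (f (x ** x))), (mulCA u (ginv G x) v).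
    reflexivity.
Qed.
Arguments Gf_sq_assoc_iff_in_G {G f f'}.

Lemma iso_preserves_G {G : ComGroup} {f1 f1' f2 f2' : G -> G}
  (hf1 : is_inverse f1 f1') (hf2 : is_inverse f2 f2')
  (hng1 : ~ is_group (Gf_mul f1)) (hng2 : ~ is_group (Gf_mul f2))
  {phi phi' : Gf_carrier G -> Gf_carrier G} :
  (forall x, phi' (phi x) = x) -> (forall y, phi (phi' y) = y) ->
  (forall a b, phi (Gf_mul f1 a b) = Gf_mul f2 (phi a) (phi b)) ->
  forall s, in_G (phi s) <-> in_G s.
Proof.
  intros phi'phi phiphi' Hm s.
  rewrite <- (Gf_sq_assoc_iff_in_G hf2 hng2 (phi s)),
    <- (Gf_sq_assoc_iff_in_G hf1 hng1 s).
  symmetry; exact (iso_sq_assoc phi'phi phiphi' Hm s).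
Qed.

Lemma in_G_inl {G : ComGroup} (s : Gf_carrier G) : in_G s -> s = inl (Gf_val s).
Proof. destruct s; simpl; tauto. Qed.

Lemma not_in_G_inr {G : ComGroup} (s : Gf_carrier G) : ~ in_G s -> s = inr (Gf_val s).
Proof. destruct s; simpl; tauto. Qed.

(* From an isomorphism preserving G we read off the automorphism psi
   (the restriction to G) and the translation a (phi(1-bar) = a-bar). *)
Section IsoToAut.
Variables (G : ComGroup) (f1 f2 f2' : G -> G).
Hypothesis f2'f2 : forall y, f2' (f2 y) = y.
Variables phi phi' : Gf_carrier G -> Gf_carrier G.
Hypothesis phi'phi : forall x, phi' (phi x) = x.
Hypothesis phiphi' : forall y, phi (phi' y) = y.
Hypothesis phi_mul : forall a b, phi (Gf_mul f1 a b) = Gf_mul f2 (phi a) (phi b).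
Hypothesis phi_G : forall s, in_G (phi s) <-> in_G s.

Let psi (x : G) : G := Gf_val (phi (inl x)).
Let a : G := Gf_val (phi (inr (gone G))).

Lemma phi_inl (x : G) : phi (inl x) = inl (psi x).
Proof. apply in_G_inl, phi_G; exact I. Qed.

Lemma phi_inr (x : G) : phi (inr x) = inr (Gf_val (phi (inr x))).
Proof. apply not_in_G_inr; rewrite phi_G; simpl; tauto. Qed.

Lemma psi_mul (x y : G) : psi (x ** y) = psi x ** psi y.
Proof.
  unfold psi at 1. change (inl (x ** y)) with (Gf_mul f1 (inl x) (inl y)).
  rewrite phi_mul, !phi_inl. reflexivity.
Qed.

Lemma psi_one : psi (gone G) = gone G.
Proof. apply idem_one. rewrite <- psi_mul, gmul1. reflexivity. Qed.

(* phi(x-bar) = (psi(x) a)-bar, since x-bar = x * 1-bar. *)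
Lemma phi_inr_val (x : G) : Gf_val (phi (inr x)) = psi x ** a.
Proof.
  rewrite <- (mulr1 x) at 1.
  change (inr (x ** gone G)) with (Gf_mul f1 (inl x) (inr (gone G))).
  rewrite phi_mul, phi_inl, phi_inr. reflexivity.
Qed.

(* Comparing phi(x-bar * 1-bar) computed in G(f1) and in G(f2). *)
Lemma psi_twist (z : G) : f2' (psi (f1 z)) = (a ** a) ** psi z.
Proof.
  unfold psi at 1. rewrite <- (mulr1 z) at 1.
  change (inl (f1 (z ** gone G))) with (Gf_mul f1 (inr z) (inr (gone G))).
  rewrite phi_mul, (phi_inr z), (phi_inr (gone G)). simpl.
  rewrite f2'f2, !phi_inr_val, psi_one, gmul1, <- gmulA. apply gmulC.
Qed.

Lemma psi_bijective : exists psi', is_inverse psi psi'.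
Proof.
  assert (phi'_G : forall s, in_G (phi' s) <-> in_G s)
    by (intro s; rewrite <- phi_G, phiphi'; tauto).
  exists (fun y => Gf_val (phi' (inl y))). split; intro x; cbv beta.
  - rewrite <- phi_inl, phi'phi. reflexivity.
  - unfold psi. rewrite <- (in_G_inl (phi' (inl x))), phiphi'; [reflexivity|].
    apply phi'_G; exact I.
Qed.

Lemma iso_twisted_aut :
  exists psi : G -> G,
    is_aut psi /\
    (forall x, f2' (psi (f1 x)) = f2' (psi (f1 (gone G))) ** psi x) /\
    is_square (f2' (psi (f1 (gone G)))).
Proof.
  exists psi. split; [|split].
  - exact (conj psi_bijective psi_mul).
  - intro x. rewrite !psi_twist, psi_one, mulr1. reflexivity.
  - exists a. rewrite psi_twist, psi_one, mulr1. reflexivity.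
Qed.

End IsoToAut.
Arguments iso_twisted_aut {G f1 f2 f2'} f2'f2 {phi phi'}.

Section AutToIso.
Variables (G : ComGroup) (f1 f2 f2' : G -> G).
Hypothesis f2f2' : forall y, f2 (f2' y) = y.
Variables (psi psi' : G -> G) (a : G).
Hypothesis psi_inv : is_inverse psi psi'.
Hypothesis psi_mul : forall x y, psi (x ** y) = psi x ** psi y.
Hypothesis psi_twist : forall x, f2' (psi (f1 x)) = (a ** a) ** psi x.

Definition twist_iso (s : Gf_carrier G) : Gf_carrier G :=
  match s with inl x => inl (psi x) | inr x => inr (a ** psi x) end.

Definition twist_iso_inv (s : Gf_carrier G) : Gf_carrier G :=
  match s with inl y => inl (psi' y) | inr y => inr (psi' (ginv G a ** y)) end.

Lemma twist_iso_mul (s t : Gf_carrier G) :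
  twist_iso (Gf_mul f1 s t) = Gf_mul f2 (twist_iso s) (twist_iso t).
Proof.
  assert (psi_f1 : forall z, psi (f1 z) = f2 ((a ** a) ** psi z))
    by (intro z; rewrite <- psi_twist, f2f2'; reflexivity).
  destruct s as [x|x], t as [y|y]; simpl; f_equal; rewrite ?psi_mul.
  - reflexivity.
  - apply mulCA.
  - apply gmulA.
  - rewrite psi_f1, psi_mul. f_equal.
    rewrite <- !gmulA. f_equal. apply mulCA.
Qed.

Lemma twisted_aut_iso : magma_iso (Gf_mul f1) (Gf_mul f2).
Proof.
  destruct psi_inv as [psi'psi psipsi'].
  exists twist_iso, twist_iso_inv. split; [|split].
  - intros [x|x]; simpl; rewrite ?mulVK, psi'psi; reflexivity.
  - intros [y|y]; simpl; rewrite psipsi', ?mulKV; reflexivity.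
  - exact twist_iso_mul.
Qed.

End AutToIso.
Arguments twisted_aut_iso {G} f1 {f2 f2'} f2f2' {psi psi'} a.

Theorem proposition2p5 (G : ComGroup) (f1 f1' f2 f2' : G -> G)
  (hf1 : is_inverse f1 f1') (hf2 : is_inverse f2 f2')
  (hng1 : ~ is_group (Gf_mul f1)) (hng2 : ~ is_group (Gf_mul f2)) :
  magma_iso (Gf_mul f1) (Gf_mul f2) <->
  exists psi : G -> G,
    is_aut psi /\
    (forall x : G,
       f2' (psi (f1 x)) = gmul G (f2' (psi (f1 (gone G)))) (psi x)) /\
    is_square (f2' (psi (f1 (gone G)))).
Proof.
  split.
  - intros [phi [phi' [phi'phi [phiphi' phi_mul]]]].
    apply (iso_twisted_aut (proj1 hf2) phi'phi phiphi' phi_mul).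
    exact (iso_preserves_G hf1 hf2 hng1 hng2 phi'phi phiphi' phi_mul).
  - intros [psi [[[psi' psi_inv] psi_mul] [psi_twist [a Ha]]]].
    apply (twisted_aut_iso f1 (proj2 hf2) a psi_inv psi_mul).
    intro x. rewrite psi_twist, Ha. reflexivity.
Qed.
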